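(* Let $X$ be a nonempty set and $d$ a reflexive triangular symmetric on $X$ such that $(X,d)$ is 0-complete. Let $T:X\to X$, $G\in\{M_1,M_2,M_3\}$, and suppose $d(Tx,Ty)\le\varphi(G(x,y))$ for all $x,y\in X$, for some asymptotic normal function $\varphi:[0,\infty)\to[0,\infty)$. Then $T$ is $d$-asymptotic, i.e. $\lim_n d(T^nx,T^{n+1}x)=0$ for every $x\in X$.
   Context: A symmetric on $X$ is a map $d:X\times X\to[0,\infty)$ with $d(x,y)=d(y,x)$; it is reflexive triangular if $d(x,z)+d(y,y)\le d(x,y)+d(y,z)$ for all $x,y,z\in X$. A sequence $(x_n)$ $0d$-converges to $x$ if $d(x_n,x)\to 0$; it is $0d$-Cauchy if for every $\varepsilon>0$ there is $j$ with $d(x_m,x_n)<\varepsilon$ whenever $j\le m<n$; $(X,d)$ is 0-complete if every $0d$-Cauchy sequence $0d$-converges to some point. Notation: $M_1(x,y)=d(x,y)$, $H(x,y)=\max\{d(x,Tx),d(y,Ty)\}$, $L(x,y)=\frac12[d(x,Ty)+d(Tx,y)]$, $M_2=\max\{M_1,H\}$, $M_3=\max\{M_1,H,L\}$. $\varphi$ is normal if $\varphi(0)=0$ and $\varphi(t)<t$ for $t>0$; it is asymptotic normal if it is normal and every sequence $(r_n)$ in $[0,\infty)$ with $r_{n+1}\le\varphi(r_n)$ for all $n$ satisfies $r_n\to0$. *)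

From Stdlib Require Import Reals Lra.
Open Scope R_scope.

Definition symmetric_d {X : Type} (d : X -> X -> R) : Prop :=
  (forall x y, 0 <= d x y) /\ (forall x y, d x y = d y x).

Definition reflexive_triangular {X : Type} (d : X -> X -> R) : Prop :=
  forall x y z, d x z + d y y <= d x y + d y z.

Definition zero_converges {X : Type} (d : X -> X -> R) (u : nat -> X) (x : X) : Prop :=
  Un_cv (fun n => d (u n) x) 0.

Definition zero_cauchy {X : Type} (d : X -> X -> R) (u : nat -> X) : Prop :=
  forall eps, eps > 0 -> exists j : nat,
    forall m n : nat, (j <= m)%nat -> (m < n)%nat -> d (u m) (u n) < eps.

Definition zero_complete {X : Type} (d : X -> X -> R) : Prop :=
  forall u : nat -> X, zero_cauchy d u -> exists x, zero_converges d u x.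

Definition M1 {X : Type} (d : X -> X -> R) (x y : X) : R := d x y.
Definition Hf {X : Type} (d : X -> X -> R) (T : X -> X) (x y : X) : R :=
  Rmax (d x (T x)) (d y (T y)).
Definition Lf {X : Type} (d : X -> X -> R) (T : X -> X) (x y : X) : R :=
  (d x (T y) + d (T x) y) / 2.
Definition M2 {X : Type} (d : X -> X -> R) (T : X -> X) (x y : X) : R :=
  Rmax (M1 d x y) (Hf d T x y).
Definition M3 {X : Type} (d : X -> X -> R) (T : X -> X) (x y : X) : R :=
  Rmax (M1 d x y) (Rmax (Hf d T x y) (Lf d T x y)).

Inductive Gchoice := G1 | G2 | G3.
Definition Gfun {X : Type} (g : Gchoice) (d : X -> X -> R) (T : X -> X) : X -> X -> R :=
  match g with G1 => M1 d | G2 => M2 d T | G3 => M3 d T end.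

(* phi : [0,oo) -> [0,oo), represented as R -> R mapping [0,oo) into [0,oo). *)
Definition maps_nonneg (phi : R -> R) : Prop := forall t, 0 <= t -> 0 <= phi t.

Definition normal (phi : R -> R) : Prop :=
  phi 0 = 0 /\ forall t, t > 0 -> phi t < t.

Definition asymptotic_normal (phi : R -> R) : Prop :=
  normal phi /\
  forall r : nat -> R, (forall n, 0 <= r n) -> (forall n, r (S n) <= phi (r n)) ->
    Un_cv r 0.

Definition d_asymptotic {X : Type} (d : X -> X -> R) (T : X -> X) : Prop :=
  forall x, Un_cv (fun n => d (Nat.iter n T x) (Nat.iter (S n) T x)) 0.

(** The orbit distances [r n = d (T^n x) (T^(n+1) x)] satisfy [r (n+1) <= phi (r n)]:
    on a consecutive pair [(a, T a)] every choice of [G] equals [d a (T a)] or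
    [max (d a (T a)) (d (T a) (T (T a)))], the latter because reflexive triangularity
    bounds [L a (T a)] by the average of the two consecutive distances.  If the larger
    one were the second, the contraction would give [v <= phi v < v].  Asymptotic
    normality of [phi] then forces [r n -> 0]. *)

From Stdlib Require Import Reals Lra.
Open Scope R_scope.

Lemma normal_le_phi_Rmax (phi : R -> R) (u v : R) :
  normal phi -> 0 <= u -> v <= phi (Rmax u v) -> v <= phi u.
Proof.
  intros [_ Hlt] Hu Hv.
  destruct (Rle_dec v u) as [Hvu | Huv].
  - rewrite Rmax_left in Hv by exact Hvu; exact Hv.
  - rewrite Rmax_right in Hv by lra.
    assert (Hphi := Hlt v ltac:(lra)); lra.
Qed.

Section Orbit_pair.

Variables (X : Type) (d : X -> X -> R) (T : X -> X).
Hypotheses (Hsym : symmetric_d d) (Htri : reflexive_triangular d).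

Lemma Lf_orbit_le (a : X) :
  Lf d T a (T a) <= Rmax (d a (T a)) (d (T a) (T (T a))).
Proof.
  unfold Lf.
  assert (Htr := Htri a (T a) (T (T a))).
  assert (Hu := Rmax_l (d a (T a)) (d (T a) (T (T a)))).
  assert (Hv := Rmax_r (d a (T a)) (d (T a) (T (T a)))).
  lra.
Qed.

Lemma M2_orbit (a : X) :
  M2 d T a (T a) = Rmax (d a (T a)) (d (T a) (T (T a))).
Proof.
  unfold M2, M1, Hf.
  apply Rmax_right, Rmax_l.
Qed.

Lemma M3_orbit (a : X) :
  M3 d T a (T a) = Rmax (d a (T a)) (d (T a) (T (T a))).
Proof.
  unfold M3; rewrite Rmax_assoc.
  change (Rmax (M1 d a (T a)) (Hf d T a (T a))) with (M2 d T a (T a)).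
  rewrite M2_orbit.
  apply Rmax_left, Lf_orbit_le.
Qed.

Lemma Gfun_orbit_step (g : Gchoice) (phi : R -> R) (a : X) :
  normal phi ->
  (forall x y, d (T x) (T y) <= phi (Gfun g d T x y)) ->
  d (T a) (T (T a)) <= phi (d a (T a)).
Proof.
  intros Hnormal Hc.
  assert (Hg := Hc a (T a)).
  destruct g; simpl in Hg.
  - exact Hg.
  - rewrite M2_orbit in Hg.
    exact (normal_le_phi_Rmax _ _ _ Hnormal (proj1 Hsym _ _) Hg).
  - rewrite M3_orbit in Hg.
    exact (normal_le_phi_Rmax _ _ _ Hnormal (proj1 Hsym _ _) Hg).
Qed.

End Orbit_pair.

Theorem lemma3 (X : Type) (x0 : X) (d : X -> X -> R) (T : X -> X)
  (g : Gchoice) (phi : R -> R) :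
  symmetric_d d -> reflexive_triangular d -> zero_complete d ->
  maps_nonneg phi -> asymptotic_normal phi ->
  (forall x y, d (T x) (T y) <= phi (Gfun g d T x y)) ->
  d_asymptotic d T.
Proof.
  intros Hsym Htri _ _ [Hnormal Hasy] Hc x.
  apply Hasy.
  - intros n; apply (proj1 Hsym).
  - intros n; exact (Gfun_orbit_step X d T Hsym Htri g phi _ Hnormal Hc).
Qed.
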